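(* Let $\langle L,\leq\rangle$ and $\langle K,\leq\rangle$ be complete lattices and $f:L\to K$ a surjective lattice morphism. Let $O:L\to L$ be an operator and $A:L^2\to L^2$ an approximator of $O$ such that $O$ respects $f$ and $A$ respects $f$, and let $A_f:K^2\to K^2$ be the projection of $A$ on $K$. If $(x_j,y_j)_{j\leq\alpha}$ is a well-founded induction of $A$, then $(f(x_j),f(y_j))_{j\leq\alpha}$ is a well-founded induction of $A_f$. Moreover, if $(x_j,y_j)_{j\leq\alpha}$ is terminal, then so is $(f(x_j),f(y_j))_{j\leq\alpha}$.
   Context: A lattice morphism $f:L\to K$ satisfies $f(\bigvee X)=\bigvee f(X)$ and $f(\bigwedge X)=\bigwedge f(X)$ for all $X\subseteq L$. For a complete lattice $L$ with least element $\bot$ and greatest element $\top$, the bilattice $L^2$ carries the precision order $(x,y)\leq_p(u,v)$ iff $x\leq u$ and $v\leq y$; it is a complete lattice. Write $(x,y)_1=x$, $(x,y)_2=y$. An approximator of $O:L\to L$ is a $\leq_p$-monotone operator $A:L^2\to L^2$ with $A(x,x)_1\leq O(x)\leq A(x,x)_2$ for all $x$; approximators are assumed symmetric, i.e. $A(x,y)_1=A(y,x)_2$. An operator $O$ respects $f$ if $f(x)=f(y)$ implies $f(O(x))=f(O(y))$. Let $f^2:L^2\to K^2$, $(x,y)\mapsto(f(x),f(y))$. $A$ respects $f$ if for all $p,q\in L^2$ with $f^2(p)=f^2(q)$ we have $f^2(A(p))=f^2(A(q))$; in that case (with $f$ surjective) the projection $A_f$ is the unique operator $K^2\to K^2$ with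 $A_f\circ f^2=f^2\circ A$. For an operator $B$ on a bilattice $M^2$, a $B$-refinement of $(x,y)$ is a pair $(x',y')$ such that either (i) $(x,y)\leq_p(x',y')\leq_p B(x,y)$ (application refinement), or (ii) $x'=x$ and $B(x,y')_2\leq y'\leq y$ (unfoundedness refinement); it is strict if $(x',y')\neq(x,y)$. A well-founded induction of $B$ is a sequence $(x_i,y_i)_{i\leq\beta}$, $\beta$ an ordinal, with $(x_0,y_0)=(\bot,\top)$, $(x_{i+1},y_{i+1})$ a $B$-refinement of $(x_i,y_i)$ for all $i<\beta$, and $(x_\lambda,y_\lambda)=\bigvee_{\leq_p}\{(x_i,y_i)\mid i<\lambda\}$ for each limit ordinal $\lambda\leq\beta$. It is terminal if $(x_\beta,y_\beta)$ has no strict $B$-refinement. *)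

Set Implicit Arguments.

Record CompleteLattice := {
  carrier :> Type;
  le : carrier -> carrier -> Prop;
  le_refl : forall x, le x x;
  le_trans : forall x y z, le x y -> le y z -> le x z;
  le_antisym : forall x y, le x y -> le y x -> x = y;
  sup : (carrier -> Prop) -> carrier;
  sup_ub : forall (X : carrier -> Prop) x, X x -> le x (sup X);
  sup_least : forall (X : carrier -> Prop) u,
      (forall x, X x -> le x u) -> le (sup X) u;
  inf : (carrier -> Prop) -> carrier;
  inf_lb : forall (X : carrier -> Prop) x, X x -> le (inf X) x;
  inf_greatest : forall (X : carrier -> Prop) u,
      (forall x, X x -> le u x) -> le u (inf X)
}.

Arguments le {c} _ _.
Arguments sup {c} _.
Arguments inf {c} _.

Definition bot (L : CompleteLattice) : L := sup (fun _ : L => False).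
Definition top (L : CompleteLattice) : L := inf (fun _ : L => False).

Definition image {A B : Type} (f : A -> B) (X : A -> Prop) : B -> Prop :=
  fun y => exists x, X x /\ y = f x.

Definition lattice_morphism {L K : CompleteLattice} (f : L -> K) : Prop :=
  forall X : L -> Prop, f (sup X) = sup (image f X) /\ f (inf X) = inf (image f X).

Definition surjective {A B : Type} (f : A -> B) : Prop :=
  forall y, exists x, f x = y.

Definition le_p {L : CompleteLattice} (p q : L * L) : Prop :=
  le (fst p) (fst q) /\ le (snd q) (snd p).

Definition join_p {L : CompleteLattice} (P : L * L -> Prop) : L * L :=
  (sup (image (@fst L L) P), inf (image (@snd L L) P)).

Definition approximator {L : CompleteLattice} (O : L -> L)
    (A : L * L -> L * L) : Prop :=
  (forall p q, le_p p q -> le_p (A p) (A q)) /\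
  (forall x, le (fst (A (x, x))) (O x) /\ le (O x) (snd (A (x, x)))) /\
  (forall x y, fst (A (x, y)) = snd (A (y, x))).

Definition f2 {L K : Type} (f : L -> K) (p : L * L) : K * K :=
  (f (fst p), f (snd p)).

Definition op_respects {L K : Type} (f : L -> K) (O : L -> L) : Prop :=
  forall x y, f x = f y -> f (O x) = f (O y).

Definition approx_respects {L K : Type} (f : L -> K)
    (A : L * L -> L * L) : Prop :=
  forall p q, f2 f p = f2 f q -> f2 f (A p) = f2 f (A q).

Definition refinement {M : CompleteLattice} (B : M * M -> M * M)
    (p p' : M * M) : Prop :=
  (le_p p p' /\ le_p p' (B p)) \/
  (fst p' = fst p /\ le (snd (B (fst p, snd p'))) (snd p') /\ le (snd p') (snd p)).

Definition strict_refinement {M : CompleteLattice} (B : M * M -> M * M)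
    (p p' : M * M) : Prop :=
  refinement B p p' /\ p' <> p.

(** Index sets {j | j <= beta} of ordinals are represented, up to order
    isomorphism, by a well-ordered type I (strict order lt) with a
    greatest element. *)
Definition well_order_with_max (I : Type) (lt : I -> I -> Prop) (m : I) : Prop :=
  (forall i, ~ lt i i) /\
  (forall i j k, lt i j -> lt j k -> lt i k) /\
  (forall i j, lt i j \/ i = j \/ lt j i) /\
  well_founded lt /\
  (forall i, lt i m \/ i = m).

Definition is_least (I : Type) (lt : I -> I -> Prop) (i : I) : Prop :=
  forall j, ~ lt j i.

Definition is_succ (I : Type) (lt : I -> I -> Prop) (i j : I) : Prop :=
  lt i j /\ forall k, lt i k -> lt k j -> False.

Definition is_limit (I : Type) (lt : I -> I -> Prop) (l : I) : Prop :=
  (exists i, lt i l) /\ (forall i, ~ is_succ lt i l).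

Definition wf_induction {M : CompleteLattice} (B : M * M -> M * M)
    (I : Type) (lt : I -> I -> Prop) (s : I -> M * M) : Prop :=
  (forall i, is_least lt i -> s i = (bot M, top M)) /\
  (forall i j, is_succ lt i j -> refinement B (s i) (s j)) /\
  (forall l, is_limit lt l -> s l = join_p (fun p => exists i, lt i l /\ p = s i)).

Definition terminal {M : CompleteLattice} (B : M * M -> M * M)
    (I : Type) (m : I) (s : I -> M * M) : Prop :=
  forall p', ~ strict_refinement B (s m) p'.

(** A complete lattice morphism is monotone, preserves the bottom, the top and
    precision joins, so it carries the defining clauses of a well-founded
    induction of [A] to those of [A_f], using [A_f o f^2 = f^2 o A].

    Terminality needs the converse direction: every [A_f]-refinement of [f^2(p)]
    must come from an [A]-refinement of [p].  By surjectivity, the largest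
    preimage [lift u = sup {z | f z <= u}] of [u] satisfies [f (lift u) = u],
    so any [u <= f a] is the image of [a /\ lift u], an element below [a].
    Lifting the components of the refinement this way works as soon as
    [p <=_p A p], and every stage of a well-founded induction of a monotone
    operator has this property, by induction along the well-order. *)

From Stdlib Require Import Classical.

Arguments le_trans {c x y z} _ _.

Section LatticeFacts.
Variable L : CompleteLattice.

Lemma sup_ext (X Y : L -> Prop) : (forall x, X x <-> Y x) -> sup X = sup Y.
Proof.
  intros H; apply le_antisym; apply sup_least; intros x Hx; apply sup_ub, H, Hx.
Qed.

Lemma inf_ext (X Y : L -> Prop) : (forall x, X x <-> Y x) -> inf X = inf Y.
Proof.
  intros H; apply le_antisym; apply inf_greatest; intros x Hx; apply inf_lb, H, Hx.
Qed.

Lemma bot_le (x : L) : le (bot L) x.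
Proof. apply sup_least; intros _ []. Qed.

Lemma le_top (x : L) : le x (top L).
Proof. apply inf_greatest; intros _ []. Qed.

Definition meet (a b : L) : L := inf (fun z => z = a \/ z = b).

Lemma le_meet_l (a b : L) : le (meet a b) a.
Proof. apply inf_lb; auto. Qed.

Lemma le_meet_r (a b : L) : le (meet a b) b.
Proof. apply inf_lb; auto. Qed.

Lemma le_meet (a b c : L) : le c a -> le c b -> le c (meet a b).
Proof. intros Ha Hb; apply inf_greatest; intros z [-> | ->]; assumption. Qed.

Lemma meet_r (a b : L) : le b a -> meet a b = b.
Proof.
  intros H; apply le_antisym; [apply le_meet_r | apply le_meet; auto using le_refl].
Qed.

Lemma meet_l (a b : L) : le a b -> meet a b = a.
Proof.
  intros H; apply le_antisym; [apply le_meet_l | apply le_meet; auto using le_refl].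
Qed.

Lemma le_p_trans (p q r : L * L) : le_p p q -> le_p q r -> le_p p r.
Proof. intros [H1 H2] [H3 H4]; split; eapply le_trans; eassumption. Qed.

Lemma le_p_join_p (P : L * L -> Prop) p : P p -> le_p p (join_p P).
Proof.
  intros Hp; split; simpl; [apply sup_ub | apply inf_lb]; exists p; auto.
Qed.

Lemma join_p_ext (P Q : L * L -> Prop) :
  (forall p, P p <-> Q p) -> join_p P = join_p Q.
Proof.
  intros H; unfold join_p; f_equal; [apply sup_ext | apply inf_ext];
    intros x; split; intros [p [Hp ->]]; exists p; split; auto; apply H; auto.
Qed.

End LatticeFacts.

Arguments meet {L} a b.
Arguments meet_l {L a b} _.
Arguments meet_r {L a b} _.
Arguments le_p_trans {L p q r} _ _.
Arguments le_p_join_p {L P p} _.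

Section Morphism.
Variables (L K : CompleteLattice) (f : L -> K).
Hypothesis Hmor : lattice_morphism f.

Lemma morph_meet (a b : L) : f (meet a b) = meet (f a) (f b).
Proof.
  unfold meet; rewrite (proj2 (Hmor _)); apply inf_ext; intros k; split.
  - intros [z [[-> | ->] ->]]; auto.
  - intros [-> | ->]; [exists a | exists b]; auto.
Qed.

Lemma morph_monotone (x y : L) : le x y -> le (f x) (f y).
Proof.
  intros H; rewrite <- (meet_l H), morph_meet; apply le_meet_r.
Qed.

Lemma morph_bot : f (bot L) = bot K.
Proof.
  unfold bot; rewrite (proj1 (Hmor _)); apply sup_ext.
  intros k; split; [intros [z [[] _]] | intros []].
Qed.

Lemma morph_top : f (top L) = top K.
Proof.
  unfold top; rewrite (proj2 (Hmor _)); apply inf_ext.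
  intros k; split; [intros [z [[] _]] | intros []].
Qed.

Lemma f2_monotone (p q : L * L) : le_p p q -> le_p (f2 f p) (f2 f q).
Proof. intros [H1 H2]; split; apply morph_monotone; assumption. Qed.

Lemma f2_join_p (P : L * L -> Prop) : f2 f (join_p P) = join_p (image (f2 f) P).
Proof.
  unfold join_p, f2; simpl; rewrite (proj1 (Hmor _)), (proj2 (Hmor _)).
  f_equal; [apply sup_ext | apply inf_ext]; intros k; split.
  - intros [z [[p [Hp ->]] ->]]; exists (f2 f p); split; [exists p |]; auto.
  - intros [q [[p [Hp ->]] ->]]; eexists; split; [exists p |]; eauto.
  - intros [z [[p [Hp ->]] ->]]; exists (f2 f p); split; [exists p |]; auto.
  - intros [q [[p [Hp ->]] ->]]; eexists; split; [exists p |]; eauto.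
Qed.

Definition lift (u : K) : L := sup (fun z => le (f z) u).

Lemma le_lift (z : L) (u : K) : le (f z) u -> le z (lift u).
Proof. intros H; apply sup_ub, H. Qed.

Hypothesis Hsurj : surjective f.

Lemma f_lift (u : K) : f (lift u) = u.
Proof.
  apply le_antisym.
  - unfold lift; rewrite (proj1 (Hmor _)); apply sup_least.
    intros k [z [Hz ->]]; exact Hz.
  - destruct (Hsurj u) as [v <-]; apply morph_monotone, le_lift, le_refl.
Qed.

Lemma f_meet_lift (a : L) (u : K) : le u (f a) -> f (meet a (lift u)) = u.
Proof. intros H; rewrite morph_meet, f_lift; apply meet_r, H. Qed.

End Morphism.

Arguments lift {L K} f u.
Arguments morph_monotone {L K f} Hmor {x y} _.
Arguments morph_bot {L K f} Hmor.
Arguments morph_top {L K f} Hmor.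
Arguments f2_monotone {L K f} Hmor {p q} _.
Arguments f2_join_p {L K f} Hmor P.
Arguments le_lift {L K f z u} _.
Arguments f_meet_lift {L K f} Hmor Hsurj {a u} _.

Lemma least_succ_or_limit (I : Type) (lt : I -> I -> Prop) (l : I) :
  is_least lt l \/ (exists i, is_succ lt i l) \/ is_limit lt l.
Proof.
  destruct (classic (exists i, is_succ lt i l)) as [H | H]; auto.
  destruct (classic (exists i, lt i l)) as [H' | H'].
  - right; right; split; auto. intros i Hi; apply H; eauto.
  - left; intros j Hj; apply H'; eauto.
Qed.

Section BelowOperator.
Variables (L : CompleteLattice) (A : L * L -> L * L).
Hypothesis Amono : forall p q, le_p p q -> le_p (A p) (A q).

Lemma refinement_below {p p' : L * L} :
  le_p p (A p) -> refinement A p p' -> le_p p' (A p').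
Proof.
  intros Hp [[H1 H2] | [H1 [H2 H3]]].
  - exact (le_p_trans H2 (Amono _ _ H1)).
  - destruct p as [x y], p' as [x' y']; simpl in *; subst x'.
    assert (Hpp' : le_p (x, y) (x, y')) by (split; simpl; auto using le_refl).
    split; [exact (le_trans (proj1 Hp) (proj1 (Amono _ _ Hpp'))) | exact H2].
Qed.

Lemma join_p_below {P : L * L -> Prop} :
  (forall p, P p -> le_p p (A p)) -> le_p (join_p P) (A (join_p P)).
Proof.
  intros HP; split; simpl.
  - apply sup_least; intros k [p [Hp ->]].
    exact (le_trans (proj1 (HP p Hp)) (proj1 (Amono _ _ (le_p_join_p Hp)))).
  - apply inf_greatest; intros k [p [Hp ->]].
    exact (le_trans (proj2 (Amono _ _ (le_p_join_p Hp))) (proj2 (HP p Hp))).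
Qed.

Lemma wf_induction_below {I : Type} {lt : I -> I -> Prop} {s : I -> L * L} :
  well_founded lt -> wf_induction A lt s -> forall i, le_p (s i) (A (s i)).
Proof.
  intros wf [Hleast [Hsucc Hlim]] l.
  induction l as [l IH] using (well_founded_ind wf).
  destruct (least_succ_or_limit _ lt l) as [H | [[i Hi] | H]].
  - rewrite (Hleast l H); split; [apply bot_le | apply le_top].
  - exact (refinement_below (IH i (proj1 Hi)) (Hsucc i l Hi)).
  - rewrite (Hlim l H); apply join_p_below.
    intros p [i [Hi ->]]; exact (IH i Hi).
Qed.

End BelowOperator.

Arguments wf_induction_below {L A} Amono {I lt s} _ _ i.

Section Projection.
Variables (L K : CompleteLattice) (f : L -> K).
Hypothesis Hmor : lattice_morphism f.
Variables (A : L * L -> L * L) (Af : K * K -> K * K).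
Hypothesis Amono : forall p q, le_p p q -> le_p (A p) (A q).
Hypothesis Hproj : forall p, Af (f2 f p) = f2 f (A p).

Lemma refinement_map {p p' : L * L} :
  refinement A p p' -> refinement Af (f2 f p) (f2 f p').
Proof.
  intros [[H1 H2] | [H1 [H2 H3]]].
  - left; rewrite Hproj; split; apply (f2_monotone Hmor); assumption.
  - right; simpl; rewrite H1.
    change (f (fst p), f (snd p')) with (f2 f (fst p, snd p')).
    rewrite Hproj; split; [| split]; auto; apply (morph_monotone Hmor); assumption.
Qed.

Lemma wf_induction_map {I : Type} {lt : I -> I -> Prop} {s : I -> L * L} :
  wf_induction A lt s -> wf_induction Af lt (fun j => f2 f (s j)).
Proof.
  intros [Hleast [Hsucc Hlim]]; split; [| split].
  - intros i Hi; rewrite (Hleast i Hi); unfold f2; simpl.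
    rewrite (morph_bot Hmor), (morph_top Hmor); reflexivity.
  - intros i j Hij; apply refinement_map, Hsucc, Hij.
  - intros l Hl; rewrite (Hlim l Hl), (f2_join_p Hmor); apply join_p_ext.
    intros q; split.
    + intros [p [[i [Hi ->]] ->]]; eauto.
    + intros [i [Hi ->]]; exists (s i); eauto.
Qed.

Hypothesis Hsurj : surjective f.

Lemma application_refinement_lift {p : L * L} {q : K * K} :
  le_p p (A p) -> le_p (f2 f p) q -> le_p q (f2 f (A p)) ->
  exists p', refinement A p p' /\ f2 f p' = q.
Proof.
  destruct p as [x y], q as [u v]; set (a := fst (A (x, y))).
  intros [Hxa Hay] [Hxu Hvy] [Hua Hav]; simpl in *.
  exists (meet a (lift f u), meet y (lift f v)); split.
  - left; split; split; simpl.
    + apply le_meet; [exact Hxa | apply le_lift, Hxu].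
    + apply le_meet_l.
    + apply le_meet_l.
    + apply le_meet; [exact Hay | apply le_lift, Hav].
  - unfold f2; simpl; rewrite !(f_meet_lift Hmor Hsurj); auto.
Qed.

Lemma unfoundedness_refinement_lift {p : L * L} {v : K} :
  le_p p (A p) -> le (snd (Af (f (fst p), v))) v -> le v (f (snd p)) ->
  exists p', refinement A p p' /\ f2 f p' = (f (fst p), v).
Proof.
  destruct p as [x y]; simpl; intros [_ Hay] HAv Hvy.
  set (w := meet y (lift f v)).
  assert (Hw : f w = v) by exact (f_meet_lift Hmor Hsurj Hvy).
  assert (Hwy : le w y) by apply le_meet_l.
  exists (x, w); split; [right; simpl | unfold f2; simpl; rewrite Hw; reflexivity].
  split; [reflexivity | split; [| exact Hwy]].
  apply le_meet.
  - assert (Hxyw : le_p (x, y) (x, w)) by (split; simpl; auto using le_refl).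
    exact (le_trans (proj2 (Amono _ _ Hxyw)) Hay).
  - apply le_lift.
    pose proof (Hproj (x, w)) as Hxw; unfold f2 in Hxw; simpl in Hxw.
    rewrite Hw in Hxw; rewrite Hxw in HAv; exact HAv.
Qed.

Lemma strict_refinement_lift {p : L * L} {q : K * K} :
  le_p p (A p) -> strict_refinement Af (f2 f p) q ->
  exists p', strict_refinement A p p'.
Proof.
  intros Hp [Href Hne].
  assert (Hlift : exists p', refinement A p p' /\ f2 f p' = q).
  { destruct Href as [[H1 H2] | [H1 [H2 H3]]].
    - rewrite Hproj in H2; exact (application_refinement_lift Hp H1 H2).
    - destruct q as [u v]; simpl in H1; subst u.
      exact (unfoundedness_refinement_lift Hp H2 H3). }
  destruct Hlift as [p' [Hp' <-]].
  exists p'; split; [exact Hp' | intros ->; exact (Hne eq_refl)].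
Qed.

End Projection.

Arguments wf_induction_map {L K f} Hmor {A Af} Hproj {I lt s} _.
Arguments strict_refinement_lift {L K f} Hmor {A Af} Amono Hproj Hsurj {p q} _ _.

Theorem proposition3p3 (L K : CompleteLattice) (f : L -> K)
  (Hmor : lattice_morphism f) (Hsurj : surjective f)
  (O : L -> L) (A : L * L -> L * L) (Af : K * K -> K * K)
  (HA : approximator O A) (HOf : op_respects f O) (HAf : approx_respects f A)
  (Hproj : forall p, Af (f2 f p) = f2 f (A p))
  (I : Type) (lt : I -> I -> Prop) (alpha : I)
  (HI : well_order_with_max lt alpha) (s : I -> L * L) :
  wf_induction A lt s ->
  wf_induction Af lt (fun j => f2 f (s j)) /\
  (terminal A alpha s -> terminal Af alpha (fun j => f2 f (s j))).
Proof.
  intros Hwf; destruct HA as [Amono _]; destruct HI as [_ [_ [_ [wf _]]]].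
  split; [exact (wf_induction_map Hmor Hproj Hwf) |].
  intros Hterm q Hq.
  destruct (strict_refinement_lift Hmor Amono Hproj Hsurj
              (wf_induction_below Amono wf Hwf alpha) Hq) as [p' Hp'].
  exact (Hterm p' Hp').
Qed.
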